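(* Work in $\ell_1$ with sequences indexed by $\{0,1,2,\dots\}$ and standard basis $(e_k)$. Let $\xi$ be a random variable with $\Pr\{\xi=k\}=2^{-k}$ for $k=1,2,\dots$, and let $A\colon\Omega\to\mathcal{L}(\ell_1)$ be $Ax:=\xi\,x_\xi\, e_0$ (the operator $\xi|0\rangle\langle\xi|$, whose norm is unbounded in $\omega$). Let $\xi_1,\xi_2,\dots$ be i.i.d. copies of $\xi$ and $A_ix:=\xi_i x_{\xi_i}e_0$. Then for every $x\in\ell_1$, $T>0$, $\varepsilon>0$, $$\lim_{n\to\infty}\Pr\Big\{\sup_{t\in[0,T]}\big\|\big(e^{A_1t/n}\cdots e^{A_nt/n}-e^{t\,\mathbb{E}A}\big)x\big\|_{\ell_1}>\varepsilon\Big\}=0,$$ where $\mathbb{E}Ax=\big(\sum_{k\ge1}k2^{-k}x_k\big)e_0$.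
   Context: $(\Omega,\mathcal{F},\Pr)$ is a probability space; $e^{Bt}=\sum_k t^kB^k/k!$ for bounded $B$. *)

From HB Require Import structures.
From mathcomp Require Import all_boot all_order all_algebra.
From mathcomp Require Import all_classical all_reals all_analysis.
Set Implicit Arguments. Unset Strict Implicit. Unset Printing Implicit Defensive.
Import Order.TTheory GRing.Theory Num.Theory.
Import numFieldNormedType.Exports.
Local Open Scope classical_set_scope.
Local Open Scope ring_scope.

Definition l1norm {R : realType} (y : nat -> R) : \bar R :=
  (\sum_(0 <= k <oo) (`|y k|%:E))%E.

Definition in_l1 {R : realType} (y : nat -> R) : Prop := (l1norm y < +oo)%E.

(* e^{B t} x = sum_k t^k/k! B^k x.  For a bounded operator B the series converges
   in l_1, hence coordinatewise to the same limit; we take the coordinatewise limit. *)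
Definition expop {R : realType} (B : (nat -> R) -> (nat -> R)) (t : R)
  (x : nat -> R) : nat -> R :=
  fun j => limn (series (fun k => t ^+ k / (k`!)%:R * (iter k B x) j)).

Definition Aop {R : realType} (k : nat) (x : nat -> R) : nat -> R :=
  fun j => if j == 0%N then k%:R * x k else 0.

Definition EAop {R : realType} (x : nat -> R) : nat -> R :=
  fun j => if j == 0%N then
    limn (series (fun k => if k == 0%N then 0 else k%:R * (2^-1) ^+ k * x k))
  else 0.

(* e^{A_1 t/n} ... e^{A_n t/n} x  (with xi indexed 0..n-1; rightmost factor acts first) *)
Definition prodexp {R : realType} (a : nat -> nat) (n : nat) (s : R)
  (x : nat -> R) : nat -> R :=
  foldr (fun i y => expop (Aop (a i)) s y) x (iota 0 n).

Definition mutually_independent {d} {T : measurableType d} {R : realType}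
  (P : probability T R) (xi : nat -> T -> nat) : Prop :=
  forall (s : seq nat) (k : nat -> nat), uniq s ->
    P (\bigcap_(i in [set` s]) (xi i @^-1` [set k i])) =
    (\prod_(i <- s) P (xi i @^-1` [set k i]))%E.

From HB Require Import structures.
From mathcomp Require Import all_boot all_order all_algebra.
From mathcomp Require Import all_classical all_reals all_analysis.
From mathcomp Require Import ring lra zify measurable_realfun.
Import Order.TTheory GRing.Theory Num.Theory.
Import numFieldNormedType.Exports.
Set Implicit Arguments. Unset Strict Implicit. Unset Printing Implicit Defensive.
Local Open Scope classical_set_scope.
Local Open Scope ring_scope.

(* Each A_k and E A maps l_1 into the line spanned by e_0 and vanishes on e_0,
   so it squares to zero and its exponential is I + tB.  As the A_k kill the
   e_0 component that the earlier factors add, the product of exponentials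
   collapses and the error at time t is
     t ((1/n) sum_i xi_i x_(xi_i) - sum_k k 2^-k x_k) e_0,
   whose supremum over [0, T] is T times the deviation of the sample mean of
   f(xi_i), f(k) = k x_k, from its mean.  Since k^2 2^-k <= 2 and x is summable,
   f(xi) has a finite second moment, so Chebyshev's inequality (pairwise
   independence makes the variances add), applied to the positive and negative
   parts of f, bounds the probability of a deviation by C/n. *)

Section Exponentials.
Variable R : realType.

Definition mass (k : nat) : R := (2^-1) ^+ k.

Lemma mass_ge0 k : 0 <= mass k.
Proof. exact: exprn_ge0. Qed.

Definition mean (g : nat -> R) : R := limn (series (fun k => g k * mass k)).

Definition sample_mean (a : nat -> nat) (g : nat -> R) (n : nat) : R :=
  (\sum_(i < n) g (a i)) / n%:R.

Definition e0 (c : R) : nat -> R := fun j => if j == 0%N then c else 0.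

Definition coef_e0 (x : nat -> R) (k : nat) : R := k%:R * x k.

Lemma AopE k x : Aop k x = e0 (coef_e0 x k).
Proof. by []. Qed.

Lemma coef_e0_e0 c : coef_e0 (e0 c) = fun=> 0.
Proof. by apply: funext => -[|k]; rewrite /coef_e0 ?mul0r // mulr0. Qed.

Lemma mean0 : mean (fun=> 0) = 0.
Proof.
rewrite /mean (_ : series _ = fun=> 0) ?lim_cst //.
by apply: funext => n; rewrite /series /= big1 // => k _; rewrite mul0r.
Qed.

Lemma EAopE x : EAop x = e0 (mean (coef_e0 x)).
Proof.
rewrite /EAop /e0 /mean /coef_e0; apply: funext => j; case: (j == 0%N) => //.
by congr (limn (series _)); apply: funext => -[|k] /=; rewrite ?mul0r // mulrAC.
Qed.

Lemma e0D c c' j : e0 c j + e0 c' j = e0 (c + c') j.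
Proof. by rewrite /e0; case: (j == 0%N); rewrite ?addr0. Qed.

Lemma coef_e0_addr_e0 x c : coef_e0 (x \+ e0 c) = coef_e0 x.
Proof. by apply: funext => -[|k]; rewrite /coef_e0 /e0 /= ?mul0r // addr0. Qed.

Lemma limn_series_nat2 (u : nat -> R) : (forall k, (2 <= k)%N -> u k = 0) ->
  limn (series u) = u 0%N + u 1%N.
Proof.
move=> hu; apply: lim_near_cst => //; exists 2%N => // n /= hn.
rewrite /series /= (@big_cat_nat _ _ _ 2) //= !big_nat_recl //= big_geq //.
rewrite big_nat_cond big1 ?addr0 // => i /andP[/andP[h _] _]; exact: hu.
Qed.

Lemma expop_nilpotent (B : (nat -> R) -> nat -> R) t y :
  (forall z, B (B z) = fun=> 0) -> expop B t y = fun j => y j + t * B y j.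
Proof.
move=> hB; apply: funext => j; rewrite /expop limn_series_nat2; last first.
  by case=> [//|[//|k]] _ /=; rewrite hB mulr0.
by rewrite /= expr0 expr1 fact0 divr1 mul1r divr1.
Qed.

Lemma Aop_e0 k c : Aop k (e0 c) = fun=> 0.
Proof. by rewrite AopE coef_e0_e0; apply: funext => -[]. Qed.

Lemma EAop_e0 c : EAop (e0 c) = fun=> 0.
Proof. by rewrite EAopE coef_e0_e0 mean0; apply: funext => -[]. Qed.

Lemma expop_Aop k t y : expop (Aop k) t y = y \+ e0 (t * coef_e0 y k).
Proof.
rewrite expop_nilpotent => [|z]; last by rewrite [Aop k z]AopE Aop_e0.
by rewrite AopE; apply: funext => j /=; rewrite /e0; case: (j == 0%N); rewrite ?mulr0.
Qed.

Lemma expop_EAop t y : expop EAop t y = y \+ e0 (t * mean (coef_e0 y)).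
Proof.
rewrite expop_nilpotent => [|z]; last by rewrite [EAop z]EAopE EAop_e0.
by rewrite EAopE; apply: funext => j /=; rewrite /e0; case: (j == 0%N); rewrite ?mulr0.
Qed.

Lemma prodexpE (a : nat -> nat) n s x :
  prodexp a n s x = x \+ e0 (s * \sum_(i < n) coef_e0 x (a i)).
Proof.
rewrite -(big_mkord xpredT (fun i => coef_e0 x (a i))) /index_iota subn0 /prodexp.
elim: (iota 0 n) => /= [|i l ->].
  by apply: funext => j; rewrite big_nil mulr0 /e0 /=; case: (j == 0%N); rewrite addr0.
rewrite expop_Aop coef_e0_addr_e0 big_cons; apply: funext => j /=.
by rewrite -addrA e0D mulrDr [_ + s * _]addrC.
Qed.

Lemma prodexp_subE (a : nat -> nat) n t x :
  (fun j => prodexp a n (t / n%:R) x j - expop EAop t x j) =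
  e0 (t * (sample_mean a (coef_e0 x) n - mean (coef_e0 x))).
Proof.
rewrite prodexpE expop_EAop /sample_mean; apply: funext => j /=.
by rewrite /e0; case: (j == 0%N); rewrite ?subrr //; ring.
Qed.

Lemma l1norm_e0 c : l1norm (e0 c) = `|c|%:E.
Proof.
rewrite /l1norm (@nneseries_split _ _ 0 1) //= big_nat1 /= eseries0 ?adde0 //.
by move=> [|i] //= _ _; rewrite normr0.
Qed.

Lemma ereal_sup_itv_mulr (T c : R) : 0 <= T -> 0 <= c ->
  ereal_sup [set (t * c)%:E | t in `[0, T]] = (T * c)%:E.
Proof.
move=> T0 c0; apply: le_anti; apply/andP; split.
  apply: ge_ereal_sup => _ [t /= + <-]; rewrite in_itv /= => /andP[_ tT].
  by rewrite lee_fin ler_wpM2r.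
by apply: ereal_sup_ubound; exists T => //=; rewrite in_itv /= lexx T0.
Qed.

Lemma ereal_sup_l1norm_prodexp_sub (a : nat -> nat) n x (T : R) : 0 <= T ->
  ereal_sup [set l1norm (fun j => prodexp a n (t / n%:R) x j - expop EAop t x j)
     | t in `[0, T]] =
  (T * `|sample_mean a (coef_e0 x) n - mean (coef_e0 x)|)%:E.
Proof.
move=> T0; rewrite -ereal_sup_itv_mulr //; congr ereal_sup.
apply: eq_imagel => t; rewrite /= in_itv /= => /andP[t0 _].
by rewrite prodexp_subE l1norm_e0 normrM ger0_norm.
Qed.

End Exponentials.

Definition finite_moments (R : realType) (g : nat -> R) :=
  (\sum_(k <oo) (`|g k| * mass R k)%:E < +oo)%E /\
  (\sum_(k <oo) (g k ^+ 2 * mass R k)%:E < +oo)%E.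

Lemma finite_moments_le (R : realType) (g h : nat -> R) :
  (forall k, `|h k| <= `|g k|) -> finite_moments g -> finite_moments h.
Proof.
move=> hg [g1 g2]; have := mass_ge0 R => mass0; split.
  apply: le_lt_trans g1; apply: lee_nneseries => [k _ _|k _].
    by rewrite lee_fin mulr_ge0.
  by rewrite lee_fin ler_wpM2r.
apply: le_lt_trans g2; apply: lee_nneseries => [k _ _|k _].
  by rewrite lee_fin mulr_ge0 ?sqr_ge0.
rewrite lee_fin ler_wpM2r // -[h k ^+ 2]real_normK ?num_real //.
by rewrite -[g k ^+ 2]real_normK ?num_real // lerXn2r // nnegrE.
Qed.

Lemma ge0_finite_moments_mean (R : realType) (g : nat -> R) :
  (forall k, 0 <= g k) -> finite_moments g ->
  (\sum_(k <oo) (g k * mass R k)%:E < +oo)%E.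
Proof.
move=> g0 [g1 _]; rewrite (eq_eseriesr (g := fun k => (`|g k| * mass R k)%:E)) //.
by move=> k _; rewrite ger0_norm.
Qed.

Lemma normr_funrpos_le (T : Type) (R : realDomainType) (f : T -> R) x :
  `|f^\+ x| <= `|f x|.
Proof. by rewrite ger0_norm // /funrpos /= ge_max ler_norm normr_ge0. Qed.

Lemma normr_funrneg_le (T : Type) (R : realDomainType) (f : T -> R) x :
  `|f^\- x| <= `|f x|.
Proof. by rewrite ger0_norm // /funrneg /= ge_max -normrN ler_norm normr_ge0. Qed.

Lemma funrposBnegE (T : Type) (R : realDomainType) (f : T -> R) x :
  f^\+ x - f^\- x = f x.
Proof. by have := congr1 (fun h => h x) (funrposBneg f). Qed.

Lemma mean_funrposBneg (R : realType) (g : nat -> R) : finite_moments g ->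
  mean g = mean g^\+ - mean g^\-.
Proof.
move=> gmom; have series_cvg h : (forall k, `|h k| <= `|g k|) -> (forall k, 0 <= h k) ->
    cvgn (series (fun k => h k * mass R k)).
  move=> hg h0; apply: nnseries_is_cvg => [k|]; first by rewrite mulr_ge0 ?mass_ge0.
  exact: ge0_finite_moments_mean (finite_moments_le hg gmom).
rewrite /mean -lim_seriesB; last 2 first.
- exact: series_cvg (normr_funrpos_le g) (funrpos_ge0 g).
- exact: series_cvg (normr_funrneg_le g) (funrneg_ge0 g).
by congr (limn (series _)); apply: funext => k; rewrite !fctE -mulrBl funrposBnegE.
Qed.

Lemma sample_mean_funrposBneg (R : realType) (a : nat -> nat) (g : nat -> R) n :
  sample_mean a g n = sample_mean a g^\+ n - sample_mean a g^\- n.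
Proof.
rewrite /sample_mean -mulrBl -sumrB; congr (_ / _).
by apply: eq_bigr => i _; rewrite funrposBnegE.
Qed.

Lemma ltr_normB_half (R : realFieldType) (a b delta : R) : delta < `|a - b| ->
  delta / 2 <= `|a| \/ delta / 2 <= `|b|.
Proof.
move=> hd; have := ler_normB a b.
have [ha|ha] := leP (delta / 2) `|a|; first by left.
have [hb|hb] := leP (delta / 2) `|b|; first by right.
lra.
Qed.

Lemma EFin_limn_series (R : realType) (a : nat -> R) : (forall k, 0 <= a k) ->
  (\sum_(k <oo) (a k)%:E < +oo)%E ->
  (limn (series a))%:E = (\sum_(k <oo) (a k)%:E)%E.
Proof.
move=> a0 ha; rewrite -EFin_lim; last exact: nnseries_is_cvg.
by congr (limn _); apply: funext => n; rewrite /series /= sumEFin.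
Qed.

Lemma measurable_set_ler d (T : measurableType d) (R : realType) (F : T -> R) a :
  measurable_fun setT F -> measurable [set w | a <= F w].
Proof.
move=> mF; have := mF measurableT _ (measurable_itv `[a, +oo[); rewrite setTI.
by congr measurable; apply/seteqP; split => w /=; rewrite in_itv /= andbT.
Qed.

Lemma measurable_set_ltr d (T : measurableType d) (R : realType) (F : T -> R) a :
  measurable_fun setT F -> measurable [set w | a < F w].
Proof.
move=> mF; have := mF measurableT _ (measurable_itv `]a, +oo[); rewrite setTI.
by congr measurable; apply/seteqP; split => w /=; rewrite in_itv /= andbT.
Qed.

Lemma sqrn_le_expn2 k : (k * k <= 2 * 2 ^ k)%N.
Proof. by elim: k => [|[|[|[|k]]] IH] //; rewrite expnS; nia. Qed.

Section GeometricWeights.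
Variable R : realType.

Lemma natr_mul_mass_le1 k : k%:R * mass R k <= 1.
Proof.
rewrite /mass exprVn ler_pdivrMr ?exprn_gt0 // mul1r -natrX ler_nat.
exact: ltnW (ltn_expl _ _).
Qed.

Lemma natr_sqr_mul_mass_le2 k : k%:R ^+ 2 * mass R k <= 2.
Proof.
rewrite /mass exprVn ler_pdivrMr ?exprn_gt0 // -!natrX -natrM ler_nat.
by rewrite -mulnn sqrn_le_expn2.
Qed.

Lemma normr_le_l1norm (x : nat -> R) k : in_l1 x -> `|x k| <= fine (l1norm x).
Proof.
move=> hx; have l0 : (0 <= l1norm x)%E by apply: nneseries_ge0.
rewrite -lee_fin fineK ?ge0_fin_numE //.
apply: le_trans (nneseries_lim_ge k.+1 _) => //.
by rewrite big_nat_recr //= leeDr // sume_ge0.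
Qed.

Lemma finite_moments_coef_e0 (x : nat -> R) : in_l1 x -> finite_moments (coef_e0 x).
Proof.
move=> hx; have := mass_ge0 R => mass0.
have coef_e0_norm k : `|coef_e0 x k| = k%:R * `|x k| by rewrite normrM normr_nat.
split.
  apply: le_lt_trans hx; apply: lee_nneseries => [k _ _|k _].
    by rewrite lee_fin mulr_ge0.
  rewrite lee_fin coef_e0_norm mulrAC ler_piMl //; exact: natr_mul_mass_le1.
set B := fine (l1norm x).
apply: (@le_lt_trans _ _ (\sum_(k <oo) ((2 * B)%:E * `|x k|%:E))%E).
  apply: lee_nneseries => [k _ _|k _].
    by rewrite lee_fin mulr_ge0 ?sqr_ge0.
  rewrite -EFinM lee_fin -[coef_e0 x k ^+ 2]real_normK ?num_real // coef_e0_norm.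
  rewrite exprMn mulrAC expr2 mulrA; apply: ler_wpM2r => //.
  apply: ler_pM => //; last exact: normr_le_l1norm.
    by rewrite mulr_ge0 // mulr_ge0.
  by rewrite -expr2 natr_sqr_mul_mass_le2.
rewrite nneseriesZl; last by move=> k _; rewrite lee_fin.
rewrite lte_mul_pinfty //; rewrite lee_fin mulr_ge0 //.
exact: le_trans (normr_le_l1norm 0 hx).
Qed.

End GeometricWeights.

Section IntegralFibers.
Local Open Scope ereal_scope.
Context d (T : measurableType d) (R : realType) (mu : {measure set T -> \bar R}).

Lemma eseries_single (F : nat -> \bar R) m : (forall k, 0 <= F k) ->
  (forall k, k != m -> F k = 0) -> \sum_(k <oo) F k = F m.
Proof.
move=> F0 Fm; rewrite (nneseries_split 0 m.+1) //= eseries0 ?adde0; last first.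
  by move=> i hi _; apply: Fm; rewrite neq_ltn hi orbT.
rewrite big_nat_recr //= big_nat_cond big1 ?add0e // => i /andP[/andP[_ hi] _].
by apply: Fm; rewrite neq_ltn hi.
Qed.

Lemma ge0_integral_nat_fibers (X : T -> nat)
  (mX : forall k, measurable (X @^-1` [set k]))
  (D : set T) (mD : measurable D) (h : nat -> T -> \bar R)
  (mh : forall k, measurable_fun [set: T] (h k)) (h0 : forall k w, 0 <= h k w) :
  \int[mu]_(w in D) h (X w) w =
  \sum_(k <oo) \int[mu]_(w in D `&` X @^-1` [set k]) h k w.
Proof.
transitivity (\int[mu]_(w in D) \sum_(k <oo) (h k \_ (X @^-1` [set k])) w).
  apply: eq_integral => w _; rewrite (@eseries_single _ (X w)).
  - by rewrite patchE mem_set.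
  - by move=> k; rewrite patchE; case: ifP.
  - move=> k; rewrite patchE; case: ifPn => //; rewrite inE /= => ->.
    by rewrite eqxx.
rewrite integral_nneseries //.
- by apply: eq_eseriesr => k _; rewrite integral_mkcondr.
- move=> k; apply/(measurable_restrict _ _ mD); first exact: mX.
  exact: measurable_funS (mh k).
- by move=> k w _; rewrite patchE; case: ifP.
Qed.

End IntegralFibers.

Section SampleMean.
Variables (R : realType) (d : measure_display) (Omega : measurableType d).
Variables (P : probability Omega R) (xi : nat -> Omega -> nat).
Hypothesis xi_meas : forall i k, measurable (xi i @^-1` [set k]).
Hypothesis xi_law : forall i k, (0 < k)%N -> P (xi i @^-1` [set k]) = (mass R k)%:E.
Hypothesis xi_indep : mutually_independent P xi.

Lemma measurable_fun_xi d' (U : measurableType d') i (g : nat -> U) :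
  measurable_fun [set: Omega] (g \o xi i).
Proof.
move=> _ Y mY; rewrite setTI.
have -> : (g \o xi i) @^-1` Y = \bigcup_(k in [set k | Y (g k)]) xi i @^-1` [set k].
  apply/seteqP; split => w /=; first by exists (xi i w).
  by move=> [k /= ? ->].
exact: bigcup_measurable (fun k _ => xi_meas i k).
Qed.

Lemma measure_xi_setI i j k l : i != j ->
  P (xi i @^-1` [set k] `&` xi j @^-1` [set l]) =
  (P (xi i @^-1` [set k]) * P (xi j @^-1` [set l]))%E.
Proof.
move=> ij; have ji : j != i by rewrite eq_sym.
have := @xi_indep [:: i; j] (fun m => if m == i then k else l).
rewrite /= inE ij !big_cons big_nil mule1 eqxx (negbTE ji) => <- //.
congr (P _); apply/seteqP; split => w /=.
  by move=> [hi hj] m; rewrite /= !inE => /orP[] /eqP ->; rewrite ?eqxx // (negbTE ji).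
move=> h; split; first by have := h i; rewrite /= !inE eqxx => /(_ isT).
by have := h j; rewrite /= !inE eqxx orbT (negbTE ji) => /(_ isT).
Qed.

(* The law of xi is only prescribed on k > 0, hence the weight at 0 must vanish. *)
Lemma integral_xi i (g : nat -> R) : (forall k, 0 <= g k) -> g 0%N = 0 ->
  (\int[P]_w (g (xi i w))%:E = \sum_(k <oo) (g k * mass R k)%:E)%E.
Proof.
move=> g0 gz.
rewrite (ge0_integral_nat_fibers P (xi_meas i) measurableT (h := fun k _ => (g k)%:E)) //.
- apply: eq_eseriesr => k _; rewrite setTI integral_cst; last exact: xi_meas.
  case: k => [|k]; first by rewrite gz mul0e mul0r.
  by rewrite EFinM; congr (_ * _)%E; exact: xi_law.
- by move=> k w; rewrite lee_fin.
Qed.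

Lemma integral_xi_mul i j (g : nat -> R) : i != j ->
  (forall k, 0 <= g k) -> g 0%N = 0 ->
  (\int[P]_w (g (xi i w) * g (xi j w))%:E =
   \sum_(k <oo) ((g k * mass R k)%:E * \sum_(l <oo) (g l * mass R l)%:E))%E.
Proof.
move=> ij g0 gz.
rewrite (ge0_integral_nat_fibers P (xi_meas i) measurableT
   (h := fun k w => (g k * g (xi j w))%:E)); last 2 first.
- by move=> k; exact: (measurable_fun_xi j (fun l => (g k * g l)%:E)).
- by move=> k w; rewrite lee_fin mulr_ge0.
apply: eq_eseriesr => k _; rewrite setTI.
rewrite (ge0_integral_nat_fibers P (xi_meas j) (xi_meas i k)
   (h := fun l _ => (g k * g l)%:E)) //; last by move=> l w; rewrite lee_fin mulr_ge0.
rewrite -nneseriesZl; last by move=> l _; rewrite lee_fin mulr_ge0 // mass_ge0.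
apply: eq_eseriesr => l _; rewrite integral_cst; last exact: measurableI.
case: k => [|k]; first by rewrite gz !mul0r !mul0e.
case: l => [|l]; first by rewrite gz !mulr0 mul0r mul0e mule0.
transitivity ((g k.+1 * g l.+1)%:E * (mass R k.+1 * mass R l.+1)%:E)%E.
  congr (_ * _)%E; rewrite EFinM -(xi_law i (ltn0Sn k)) -(xi_law j (ltn0Sn l)).
  exact: measure_xi_setI.
by rewrite -!EFinM; congr EFin; ring.
Qed.

Lemma measurable_fun_sample_mean_dev (g : nat -> R) n c :
  measurable_fun setT (fun w => `|sample_mean (xi^~ w) g n - c|).
Proof.
apply: measurableT_comp; first exact: normr_measurable.
apply: measurable_funB => //; apply: measurable_funM => //.
by apply: measurable_sum => i; exact: measurable_fun_xi.
Qed.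

Section NonnegativeWeight.
Variable g : nat -> R.
Hypotheses (g0 : forall k, 0 <= g k) (gz : g 0%N = 0).
Hypothesis g_mom : finite_moments g.

Let g2 k := g k ^+ 2.
Let Y i : Omega -> R := g \o xi i.

Let g_sum : (\sum_(k <oo) (g k * mass R k)%:E < +oo)%E.
Proof. exact: ge0_finite_moments_mean. Qed.

Let g2_sum : (\sum_(k <oo) (g2 k * mass R k)%:E < +oo)%E.
Proof. by case: g_mom. Qed.

Let g2z : g2 0%N = 0. Proof. by rewrite /g2 gz expr0n. Qed.

Let meanE : (mean g)%:E = (\sum_(k <oo) (g k * mass R k)%:E)%E.
Proof. by apply: EFin_limn_series => // k; rewrite mulr_ge0 ?mass_ge0. Qed.

Let mean2E : (mean g2)%:E = (\sum_(k <oo) (g2 k * mass R k)%:E)%E.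
Proof. by apply: EFin_limn_series => // k; rewrite mulr_ge0 ?sqr_ge0 ?mass_ge0. Qed.

Lemma Y_L2 i : Y i \in Lfun P 2%:E.
Proof.
rewrite inE; apply/andP; split; first by rewrite inE; exact: measurable_fun_xi.
rewrite inE /= /finite_norm unlock /=; apply: poweR_lty.
rewrite (eq_integral (fun w => (g2 (xi i w))%:E)); last first.
  by move=> w _; rewrite /Y powR_mulrn // real_normK // num_real.
by rewrite integral_xi // => k; exact: sqr_ge0.
Qed.

Lemma Y_L1 i : Y i \in Lfun P 1.
Proof. exact: (Lfun_subset12 (fin_num_measure P _ measurableT)) (Y_L2 i). Qed.

Lemma expectation_Y i : ('E_P[Y i] = (mean g)%:E)%E.
Proof. by rewrite unlock integral_xi // meanE. Qed.

Lemma expectation_Y2 i : ('E_P[Y i ^+ 2] = (mean g2)%:E)%E.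
Proof.
rewrite unlock (eq_integral (fun w => (g2 (xi i w))%:E)) //.
by rewrite integral_xi ?mean2E // => k; exact: sqr_ge0.
Qed.

Lemma covariance_Y i j : i != j -> covariance P (Y i) (Y j) = 0%E.
Proof.
move=> ij; rewrite covarianceE ?Y_L1 //; last exact: Lfun2_mul_Lfun1 (Y_L2 i) (Y_L2 j).
have -> : ('E_P[Y i * Y j] = (mean g * mean g)%:E)%E.
  rewrite unlock (eq_integral (fun w => (g (xi i w) * g (xi j w))%:E)) //.
  rewrite integral_xi_mul //; under eq_eseriesr do rewrite muleC.
  rewrite -meanE nneseriesZl -?meanE -?EFinM // => k _.
  by rewrite lee_fin mulr_ge0 // mass_ge0.
by rewrite !expectation_Y -EFinM -EFinB subrr.
Qed.

Lemma variance_Y i : ('V_P[Y i] = (mean g2 - mean g ^+ 2)%:E)%E.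
Proof. by rewrite varianceE ?Y_L2 // expectation_Y2 expectation_Y -EFin_expe -EFinB. Qed.

Let S n : Omega -> R := fun w => \sum_(i < n) Y i w.

Let S0 : S 0 = cst 0.
Proof. by apply: funext => w; rewrite /S big_ord0. Qed.

Let SS n : S n.+1 = (S n \+ Y n)%R.
Proof. by apply: funext => w; rewrite /S big_ord_recr. Qed.

Lemma partial_sum_L2 n : S n \in Lfun P 2%:E.
Proof.
elim: n => [|n IH]; first by rewrite S0; exact: Lfun_cst.
by rewrite SS; apply: rpredD => //; [rewrite lee_fin ler1n | move=> ?; exact: Y_L2].
Qed.

Lemma partial_sum_L1 n : S n \in Lfun P 1.
Proof. exact: (Lfun_subset12 (fin_num_measure P _ measurableT)) (partial_sum_L2 n). Qed.

Lemma expectation_partial_sum n : ('E_P[S n] = (n%:R * mean g)%:E)%E.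
Proof.
elim: n => [|n IH]; first by rewrite S0 expectation_cst mul0r.
rewrite SS expectationD ?partial_sum_L1 ?Y_L1 // IH expectation_Y -EFinD.
by rewrite mulrSr mulrDl mul1r.
Qed.

Lemma variance_partial_sum n :
  ('V_P[S n] = (n%:R * (mean g2 - mean g ^+ 2))%:E)%E.
Proof.
have cov_S m k : (m <= k)%N -> covariance P (S m) (Y k) = 0%E.
  elim: m => [|m IH] hm; first by rewrite S0 covariance_cst_l.
  rewrite SS covarianceDl ?partial_sum_L2 ?Y_L2 // IH ?covariance_Y ?adde0 //.
    by rewrite neq_ltn hm.
  exact: ltnW.
elim: n => [|n IH]; first by rewrite S0 variance_cst mul0r.
rewrite SS varianceD ?partial_sum_L2 ?Y_L2 // IH variance_Y cov_S // mule0 adde0.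
by rewrite -EFinD mulrSr mulrDl mul1r.
Qed.

Lemma chebyshev_sample_mean n (delta : R) : (0 < n)%N -> 0 < delta ->
  (P [set w | delta <= `|sample_mean (xi^~ w) g n - mean g|]%R <=
   (delta ^- 2 * ((mean g2 - mean g ^+ 2) / n%:R))%:E)%E.
Proof.
move=> n0 delta0; have nz : n%:R != 0 :> R by rewrite pnatr_eq0 -lt0n.
pose X := (n%:R^-1 \o* S n)%R.
have X_L2 : X \in Lfun P 2%:E.
  by apply: Lfun_scale; [rewrite ler1n | exact: partial_sum_L2].
have := @chebyshev _ _ _ P (mfun_Sub (sub_Lfun_mfun X_L2)) delta delta0.
rewrite /= expectationZl ?partial_sum_L1 // expectation_partial_sum.
rewrite varianceZ ?partial_sum_L2 // variance_partial_sum -!EFinM /=.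
have -> : n%:R^-1 * (n%:R * mean g) = mean g by field.
have -> : n%:R^-1 ^+ 2 * (n%:R * (mean g2 - mean g ^+ 2)) =
          (mean g2 - mean g ^+ 2) / n%:R by field.
congr (P _ <= _)%E; apply/seteqP; split => w /=;
  by rewrite /X /sample_mean /S /Y /= mulrC.
Qed.

End NonnegativeWeight.

Lemma weak_law_sample_mean (g : nat -> R) : g 0%N = 0 -> finite_moments g ->
  exists C, forall n (delta : R), (0 < n)%N -> 0 < delta ->
    (P [set w | delta < `|sample_mean (xi^~ w) g n - mean g|]%R <=
     (delta ^- 2 * (C / n%:R))%:E)%E.
Proof.
move=> gz gmom.
have gp_mom := finite_moments_le (normr_funrpos_le g) gmom.
have gm_mom := finite_moments_le (normr_funrneg_le g) gmom.
have gpz : g^\+ 0%N = 0 by rewrite /funrpos /= gz maxxx.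
have gmz : g^\- 0%N = 0 by rewrite /funrneg /= gz oppr0 maxxx.
set vp := mean (fun k => g^\+ k ^+ 2) - mean g^\+ ^+ 2.
set vm := mean (fun k => g^\- k ^+ 2) - mean g^\- ^+ 2.
exists (4 * (vp + vm)) => n delta n0 delta0.
have delta2 : 0 < delta / 2 by rewrite divr_gt0.
have hp := chebyshev_sample_mean (funrpos_ge0 g) gpz gp_mom n0 delta2.
have hm := chebyshev_sample_mean (funrneg_ge0 g) gmz gm_mom n0 delta2.
set A := [set w | _] in hp; set B := [set w | _] in hm.
have mA : measurable A by exact/measurable_set_ler/measurable_fun_sample_mean_dev.
have mB : measurable B by exact/measurable_set_ler/measurable_fun_sample_mean_dev.
have mE : measurable [set w | delta < `|sample_mean (xi^~ w) g n - mean g|].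
  exact/measurable_set_ltr/measurable_fun_sample_mean_dev.
have sub : [set w | delta < `|sample_mean (xi^~ w) g n - mean g|] `<=` A `|` B.
  move=> w /=; rewrite sample_mean_funrposBneg mean_funrposBneg // => hd.
  apply: ltr_normB_half; apply: lt_le_trans hd _; rewrite le_eqVlt; apply/orP; left.
  by apply/eqP; congr `|_|; ring.
apply: le_trans (le_measure P (mem_set mE) (mem_set (measurableU _ _ mA mB)) sub) _.
apply: le_trans (measureU2 _ mA mB) _.
apply: le_trans (leeD hp hm) _; rewrite -EFinD lee_fin le_eqVlt; apply/orP; left.
have nz : n%:R != 0 :> R by rewrite pnatr_eq0 -lt0n.
by apply/eqP; rewrite -/vp -/vm; field; rewrite nz gt_eqF.
Qed.

End SampleMean.

Lemma cvg_divrn (R : realType) (c : R) : (fun n : nat => c / n%:R) @ \oo --> 0.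
Proof.
rewrite -(mulr0 c); apply: cvgMr.
apply/(gtr0_cvgV0 (f := fun n : nat => n%:R)); last exact: cvgr_idn.
by exists 1%N => // n /=; rewrite ltr0n.
Qed.

Theorem mainTheorem9 (R : realType) (d : measure_display) (Omega : measurableType d)
  (P : probability Omega R) (xi : nat -> Omega -> nat)
  (xi_meas : forall i k, measurable (xi i @^-1` [set k]))
  (xi_law : forall i k, (0 < k)%N -> P (xi i @^-1` [set k]) = ((2^-1) ^+ k)%:E)
  (xi_indep : mutually_independent P xi)
  (x : nat -> R) (hx : in_l1 x) (T eps : R) (hT : 0 < T) (heps : 0 < eps) :
  (fun n : nat => P [set w | (eps%:E <
     ereal_sup [set l1norm (fun j => (prodexp (fun i => xi i w) n (t / n%:R) x j
                                     - expop EAop t x j)%R) | t in `[0%R, T]%classic])%E])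
    @ \oo --> 0%E.
Proof.
have [C weak_law] := weak_law_sample_mean xi_meas xi_law xi_indep
  (mul0r (x 0%N)) (finite_moments_coef_e0 hx).
have event_dev n : [set w | (eps%:E < ereal_sup [set l1norm (fun j =>
      (prodexp (fun i => xi i w) n (t / n%:R) x j - expop EAop t x j)%R)
      | t in `[0%R, T]%classic])%E] =
    [set w | eps / T < `|sample_mean (xi^~ w) (coef_e0 x) n - mean (coef_e0 x)|].
  apply/seteqP; split => w /=;
    by rewrite ereal_sup_l1norm_prodexp_sub ?ltW // lte_fin ltr_pdivrMr // mulrC.
apply: (@squeeze_cvge _ _ _ _ (cst 0%E) _ (fun n => ((eps / T) ^- 2 * (C / n%:R))%:E)).
- exists 1%N => // n /= n0; rewrite measure_ge0 event_dev /=.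
  exact: weak_law (divr_gt0 heps hT).
- exact: cvg_cst.
- apply: cvg_EFin; first exact: nearW.
  by rewrite -(mulr0 ((eps / T) ^- 2)); apply: cvgMr; exact: cvg_divrn.
Qed.
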